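(* Let $N, M \ge 1$ be integers, let $t_1,\ldots,t_N$ be real time points and $f_1,\ldots,f_M$ real frequencies, and let $B\in\mathbb{C}^{N\times M}$ have entries $B_{k,m}=\exp(-i2\pi f_m t_k)$. Let $A=\left[\mathbf{1}_N\ \ \mathrm{Re}(B)\ \ \mathrm{Im}(B)\right]\in\mathbb{R}^{N\times(2M+1)}$, where $\mathbf{1}_N$ is the all-ones column vector. Let $\sigma^2>0$, let $\alpha_0,\alpha_1,\ldots,\alpha_M>0$, and let $\Gamma=\mathrm{diag}(\alpha_0,\alpha_1,\ldots,\alpha_M,\alpha_1,\ldots,\alpha_M)$. Let $\Omega=\{1,\ldots,N\}$. For $J\subseteq\Omega$ let $P_J\in\mathbb{R}^{N\times N}$ be the diagonal matrix with $(P_J)_{kk}=1$ if $k\in J$ and $0$ otherwise, and define the set function $f:2^\Omega\to\mathbb{R}$ by $$f(J)=\mathrm{tr}\left(\sigma^2 I_N + A\Gamma A^T\right)-\mathrm{tr}\left(\sigma^2 I_N + A\left(\tfrac{1}{\sigma^2}A^TP_JA+\Gamma^{-1}\right)^{-1}A^T\right).$$ Then $f$ is a weakly submodular set function; that is, $f$ is monotone non-decreasing (i.e. $f(\mathcal{X})\le f(\mathcal{Y})$ whenever $\mathcal{X}\subseteq\mathcal{Y}\subseteq\Omega$) and its weak-submodularity constant $$c_f=\max_{(\mathcal{X},\mathcal{Y},i)\in\tilde\Omega} \frac{f_i(\mathcal{Y})}{f_i(\mathcal{X})},\qquad \tilde\Omega=\{(\mathcal{X},\mathcal{Y},i): \mathcal{X}\subseteq\mathcal{Y}\subset\Omega,\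 i\in\Omega\setminus\mathcal{Y}\},$$ is bounded (a finite real number), where $f_i(\mathcal{X})=f(\mathcal{X}\cup\{i\})-f(\mathcal{X})$.
   Context: $\mathrm{Re}(B)$ and $\mathrm{Im}(B)$ denote entrywise real and imaginary parts, and $\mathrm{tr}$ is the matrix trace. $2^\Omega$ denotes the power set of $\Omega$. The marginal gain of adding $j$ to $\mathcal{X}$ is $f_j(\mathcal{X})=f(\mathcal{X}\cup\{j\})-f(\mathcal{X})$. A monotone non-decreasing set function $f$ is called weakly submodular if its weak-submodularity constant $c_f$ (defined as in the claim) is bounded; it is submodular iff $c_f\le 1$. *)

From HB Require Import structures.
From mathcomp Require Import all_boot all_order all_algebra.
From mathcomp Require Import all_classical all_reals all_analysis.
Set Implicit Arguments. Unset Strict Implicit. Unset Printing Implicit Defensive.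
Import Order.TTheory GRing.Theory Num.Theory.
Local Open Scope ring_scope.

Section Defs.
Variable R : realType.

(* Re(B) and Im(B) for B_{k,m} = exp(-i 2 pi f_m t_k):
   Re = cos(2 pi f_m t_k), Im = - sin(2 pi f_m t_k). *)
Definition ReB (N M : nat) (t : 'I_N -> R) (fr : 'I_M -> R) : 'M[R]_(N, M) :=
  \matrix_(k < N, m < M) cos (2 * pi * fr m * t k).
Definition ImB (N M : nat) (t : 'I_N -> R) (fr : 'I_M -> R) : 'M[R]_(N, M) :=
  \matrix_(k < N, m < M) - sin (2 * pi * fr m * t k).

Definition Amat (N M : nat) (t : 'I_N -> R) (fr : 'I_M -> R)
  : 'M[R]_(N, 1 + (M + M)) :=
  row_mx (const_mx 1) (row_mx (ReB t fr) (ImB t fr)).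

Definition Gam (M : nat) (a0 : R) (a : 'I_M -> R) : 'M[R]_(1 + (M + M)) :=
  diag_mx (row_mx (const_mx a0 : 'rV[R]_1)
                  (row_mx (\row_(m < M) a m) (\row_(m < M) a m))).

Definition Psel (N : nat) (J : {set 'I_N}) : 'M[R]_N :=
  diag_mx (\row_(k < N) (if k \in J then 1 else 0)).

Definition fset_fun (N M : nat) (t : 'I_N -> R) (fr : 'I_M -> R)
  (s2 a0 : R) (a : 'I_M -> R) (J : {set 'I_N}) : R :=
  let A := Amat t fr in
  let G := Gam a0 a in
  \tr (s2%:M + A *m G *m A^T)
  - \tr (s2%:M + A *m invmx (s2^-1 *: (A^T *m Psel J *m A) + invmx G) *m A^T).

Definition gain (N : nat) (f : {set 'I_N} -> R) (j : 'I_N) (X : {set 'I_N}) : R :=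
  f (j |: X) - f X.

Definition monotone_nd (N : nat) (f : {set 'I_N} -> R) : Prop :=
  forall X Y : {set 'I_N}, X \subset Y -> f X <= f Y.

(* c_f = max over (X,Y,i), X ⊆ Y ⊊ Ω, i ∉ Y, of f_i(Y)/f_i(X) is a finite real:
   every ratio is a well-defined real (nonzero denominator) and they are bounded. *)
Definition weakly_submodular (N : nat) (f : {set 'I_N} -> R) : Prop :=
  monotone_nd f /\
  exists c : R, forall (X Y : {set 'I_N}) (i : 'I_N),
    X \subset Y -> Y \proper [set: 'I_N] -> i \notin Y ->
    gain f i X != 0 /\ gain f i Y / gain f i X <= c.
End Defs.

(** Write [Q_J = Γ^-1 + σ^-2 A^T P_J A], so that
    [f J = tr (A Γ A^T) - tr (A Q_J^-1 A^T)]. Adding [i ∉ J] to [J] adds the rank-one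
    term [σ^-2 a_i^T a_i] to [Q_J], where [a_i] is the [i]-th row of [A]. By the
    Sherman–Morrison formula, [Q_J^-1] then decreases by [k (a_i Q_J^-1)^T (a_i Q_J^-1)]
    with [k > 0], so the marginal gain is [k |a_i Q_J^-1 A^T|^2 >= k (a_i Q_J^-1 a_i^T)^2],
    which is positive because [Q_J] is positive definite and [a_i != 0] (its first
    entry is 1). Positive marginal gains make [f] monotone and every ratio in [c_f]
    well defined; as there are finitely many triples [(X, Y, i)], the ratios are
    bounded. *)
From HB Require Import structures.
From mathcomp Require Import all_boot all_order all_algebra.
From mathcomp Require Import all_classical all_reals all_analysis.
From mathcomp Require Import ring.
Import Order.TTheory GRing.Theory Num.Theory.
Local Open Scope ring_scope.
Set Implicit Arguments. Unset Strict Implicit. Unset Printing Implicit Defensive.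

Section PositiveDefinite.
Variables (R : realFieldType) (n : nat).
Implicit Types (Q : 'M[R]_n) (x v : 'rV[R]_n).

Definition qform Q x : R := (x *m Q *m x^T) 0 0.

Definition posdef Q := Q^T = Q /\ forall x, x != 0 -> 0 < qform Q x.
Definition psdef Q := Q^T = Q /\ forall x, 0 <= qform Q x.

Lemma qformD P Q x : qform (P + Q) x = qform P x + qform Q x.
Proof. by rewrite /qform mulmxDr mulmxDl mxE. Qed.

Lemma qformZ c Q x : qform (c *: Q) x = c * qform Q x.
Proof. by rewrite /qform -scalemxAr -scalemxAl mxE. Qed.

Lemma qform_diag_mx (d : 'rV[R]_n) x :
  qform (diag_mx d) x = \sum_j x 0 j ^+ 2 * d 0 j.
Proof. by rewrite /qform mul_mx_diag !mxE; apply: eq_bigr => j _; rewrite !mxE; ring. Qed.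

Lemma posdef_unitmx Q : posdef Q -> Q \in unitmx.
Proof.
case=> _ Q_gt0; rewrite unitmxE unitfE; apply/negP => /det0P[v v_neq0 vQ].
by have := Q_gt0 v v_neq0; rewrite /qform vQ mul0mx mxE ltxx.
Qed.

Lemma posdef_invmx Q : posdef Q -> posdef (invmx Q).
Proof.
move=> Qpd; have Qu := posdef_unitmx Qpd; case: Qpd => Qsym Q_gt0.
split=> [|x x_neq0]; first by rewrite trmx_inv Qsym.
have y_neq0 : x *m invmx Q != 0.
  by apply: contraNneq x_neq0 => y0; rewrite -[x]mulmx1 -(mulVmx Qu) mulmxA y0 mul0mx.
have := Q_gt0 _ y_neq0.
by rewrite /qform trmx_mul trmx_inv Qsym -!mulmxA (mulmxA Q) mulmxV // mul1mx !mulmxA.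
Qed.

Lemma posdefD_psdef P Q : posdef P -> psdef Q -> posdef (P + Q).
Proof.
case=> Psym P_gt0 [Qsym Q_ge0]; split; first by rewrite raddfD /= Psym Qsym.
by move=> x x_neq0; rewrite qformD (ltr_wpDr (Q_ge0 x) (P_gt0 x x_neq0)).
Qed.

Lemma psdefZ c Q : 0 <= c -> psdef Q -> psdef (c *: Q).
Proof.
move=> c_ge0 [Qsym Q_ge0]; split; first by rewrite linearZ /= Qsym.
by move=> x; rewrite qformZ mulr_ge0.
Qed.

Lemma posdef_diag_mx (d : 'rV[R]_n) : (forall j, 0 < d 0 j) -> posdef (diag_mx d).
Proof.
move=> d_gt0; split=> [|x /rV0Pn[j xj_neq0]]; first by rewrite tr_diag_mx.
have term_ge0 i : 0 <= x 0 i ^+ 2 * d 0 i by rewrite mulr_ge0 ?sqr_ge0 ?ltW.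
rewrite qform_diag_mx lt0r psumr_neq0 ?sumr_ge0 //= andbT.
by apply/hasP; exists j; rewrite ?mem_index_enum // mulr_gt0 // exprn_even_gt0.
Qed.

Lemma invmx_rank1_update Q v c : Q \in unitmx -> 1 + c * qform (invmx Q) v != 0 ->
  invmx (Q + c *: (v^T *m v)) = invmx Q -
    (c / (1 + c * qform (invmx Q) v)) *: (invmx Q *m v^T *m (v *m invmx Q)).
Proof.
move=> Qu den_neq0; set S := invmx Q; set s := qform S v; set k := c / _.
set X := S - _; suff QX : (Q + c *: (v^T *m v)) *m X = 1%:M.
  have [Uu _] := mulmx1_unit QX.
  by rewrite -[X]mul1mx -(mulVmx Uu) -mulmxA QX mulmx1.
set W := v^T *m (v *m S).
have vSv : v *m S *m v^T = s%:M by rewrite [LHS]mx11_scalar.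
have QkX : Q *m (k *: (S *m v^T *m (v *m S))) = k *: W.
  by rewrite -scalemxAr !mulmxA mulmxV // mul1mx -mulmxA.
have cVS : c *: (v^T *m v) *m S = c *: W by rewrite -scalemxAl -mulmxA.
have cVkX : c *: (v^T *m v) *m (k *: (S *m v^T *m (v *m S))) = (c * k * s) *: W.
  rewrite -scalemxAl -scalemxAr scalerA -!mulmxA (mulmxA v S) (mulmxA (v *m S)) vSv.
  by rewrite mul_scalar_mx -scalemxAr scalerA.
rewrite /X mulmxDl !mulmxBr mulmxV // QkX cVS cVkX.
rewrite -scalerBl -addrA -scaleNr -scalerDl.
have -> : - k + (c - c * k * s) = 0 by rewrite /k; field.
by rewrite scale0r addr0.
Qed.

End PositiveDefinite.

Lemma psdef_gram_diag (R : realFieldType) m n (B : 'M[R]_(m, n)) (d : 'rV[R]_m) :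
  (forall j, 0 <= d 0 j) -> psdef (B^T *m diag_mx d *m B).
Proof.
move=> d_ge0; split=> [|x]; first by rewrite !trmx_mul trmxK tr_diag_mx mulmxA.
have -> : qform (B^T *m diag_mx d *m B) x = qform (diag_mx d) (x *m B^T).
  by rewrite /qform trmx_mul trmxK !mulmxA.
by rewrite qform_diag_mx sumr_ge0 // => j _; rewrite mulr_ge0 ?sqr_ge0.
Qed.

Lemma mxtrace_tr_mul_gt0 (R : realFieldType) m (y : 'rV[R]_m) :
  y != 0 -> 0 < \tr (y^T *m y).
Proof.
move=> y_neq0; have one_gt0 (j : 'I_m) : 0 < (const_mx 1 : 'rV[R]_m) 0 j by rewrite mxE.
have [_ /(_ y y_neq0)] := posdef_diag_mx one_gt0.
by rewrite mxtrace_mulC /mxtrace big_ord1 /qform diag_const_mx mulmx1.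
Qed.

Lemma mxtrace_rank1_update_lt (R : realFieldType) m n (A : 'M[R]_(m, n)) Q i c :
  posdef Q -> 0 < c -> row i A != 0 ->
  \tr (A *m invmx (Q + c *: ((row i A)^T *m row i A)) *m A^T)
    < \tr (A *m invmx Q *m A^T).
Proof.
move=> Qpd c_gt0 ai_neq0; have [Ssym S_gt0] := posdef_invmx Qpd.
set v := row i A; set S := invmx Q; set s := qform S v.
have s_gt0 : 0 < s by exact: S_gt0.
have den_gt0 : 0 < 1 + c * s by rewrite ltr_wpDr ?ltr01 ?mulr_ge0 ?ltW.
rewrite invmx_rank1_update ?posdef_unitmx ?gt_eqF // -/S -/s.
rewrite mulmxBr mulmxBl -scalemxAr -scalemxAl.
set y := v *m S *m A^T.
have yi : y 0 i = s.
  by rewrite /y /s /qform !mxE; apply: eq_bigr => j _; rewrite !mxE.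
have y_neq0 : y != 0 by apply/rV0Pn; exists i; rewrite yi gt_eqF.
have -> : A *m (S *m v^T *m (v *m S)) *m A^T = y^T *m y.
  by rewrite /y !trmx_mul trmxK Ssym !mulmxA.
by rewrite raddfB /= mxtraceZ gtrBl mulr_gt0 ?divr_gt0 ?mxtrace_tr_mul_gt0.
Qed.

Lemma gram_delta_mx (R : comPzRingType) m n (A : 'M[R]_(m, n)) i :
  A^T *m delta_mx i i *m A = (row i A)^T *m row i A.
Proof.
by rewrite rowE trmx_mul trmx_delta -mulmxA -(mul_delta_mx (0 : 'I_1)) !mulmxA.
Qed.

Section SetFunctions.
Variables (R : realType) (N : nat) (f : {set 'I_N} -> R).

Lemma monotone_nd_gain_ge0 :
  (forall (X : {set 'I_N}) i, i \notin X -> 0 <= gain f i X) -> monotone_nd f.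
Proof.
move=> gain_ge0 X Y; have [k] := ubnP #|Y :\: X|; elim: k X => // k IHk X.
case: (set_0Vmem (Y :\: X)) => [/eqP|[y]].
  rewrite finset.setD_eq0 => YX _ XY.
  by have /eqP-> : X == Y by rewrite finset.eqEsubset XY.
rewrite inE => /andP[yX yY] YX_lt XY.
apply: (@le_trans _ _ (f (y |: X))); first by rewrite -subr_ge0 gain_ge0.
apply: IHk; last by rewrite finset.subUset finset.sub1set yY.
rewrite -ltnS (leq_trans _ YX_lt) // ltnS finset.setUC -finset.setDDl.
by rewrite proper_card // properD1 // inE yX.
Qed.

Lemma weakly_submodular_gain_gt0 :
  (forall (X : {set 'I_N}) i, i \notin X -> 0 < gain f i X) -> weakly_submodular f.
Proof.
move=> gain_gt0; split.
  by apply: monotone_nd_gain_ge0 => X i iX; rewrite ltW ?gain_gt0.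
exists (\sum_(p : {set 'I_N} * {set 'I_N} * 'I_N) `|gain f p.2 p.1.2 / gain f p.2 p.1.1|).
move=> X Y i XY _ iY; have iX : i \notin X by apply: contra iY; apply: fintype.subsetP.
split; first by rewrite gt_eqF ?gain_gt0.
rewrite (le_trans (ler_norm _)) // (bigD1 (X, Y, i)) //= lerDl.
by rewrite sumr_ge0.
Qed.

End SetFunctions.

Section Gains.
Variables (R : realType) (N M : nat) (t : 'I_N -> R) (fr : 'I_M -> R).
Variables (s2 a0 : R) (a : 'I_M -> R).
Hypotheses (s2_gt0 : 0 < s2) (a0_gt0 : 0 < a0) (a_gt0 : forall m, 0 < a m).

Local Notation A := (Amat t fr).
Local Notation G := (Gam a0 a).
Local Notation Q J := (s2^-1 *: (A^T *m Psel R J *m A) + invmx G).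

Lemma posdef_Gam : posdef G.
Proof.
apply: posdef_diag_mx => j; rewrite !mxE.
case: split_ordP => k _; rewrite !mxE //.
by case: split_ordP => l _; rewrite mxE.
Qed.

Lemma posdef_precision J : posdef (Q J).
Proof.
rewrite addrC; apply: posdefD_psdef; first exact/posdef_invmx/posdef_Gam.
apply: psdefZ; first by rewrite invr_ge0 ltW.
by apply: psdef_gram_diag => j; rewrite mxE; case: ifP.
Qed.

Lemma Psel_setU1 (J : {set 'I_N}) i :
  i \notin J -> Psel R (i |: J) = Psel R J + delta_mx i i.
Proof.
move=> iJ; apply/matrixP => p q; rewrite !mxE in_setU1.
have [<-|pq] := eqVneq p q; last first.
  rewrite !mulr0n add0r; have [<-|//] := eqVneq p i.
  by rewrite eq_sym (negbTE pq).
rewrite !mulr1n andbb; have [->|_] := eqVneq p i; last by rewrite addr0.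
by rewrite (negbTE iJ) add0r.
Qed.

Lemma row_Amat_neq0 i : row i A != 0.
Proof.
apply/rV0Pn; exists (lshift (M + M) 0).
by rewrite mxE row_mxEl mxE oner_eq0.
Qed.

Lemma gain_fset_fun_gt0 (J : {set 'I_N}) i :
  i \notin J -> 0 < gain (fset_fun t fr s2 a0 a) i J.
Proof.
move=> iJ; rewrite /gain /fset_fun Psel_setU1 // mulmxDr mulmxDl gram_delta_mx.
rewrite scalerDr subr_gt0 ltrD2l ltrN2 !mxtraceD ltrD2l [_ + invmx G]addrAC.
apply: mxtrace_rank1_update_lt; first exact: posdef_precision.
  by rewrite invr_gt0.
exact: row_Amat_neq0.
Qed.

End Gains.

Theorem theorem1 (R : realType) (N M : nat) (hN : (0 < N)%N) (hM : (0 < M)%N)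
  (t : 'I_N -> R) (fr : 'I_M -> R) (s2 a0 : R) (a : 'I_M -> R)
  (hs2 : 0 < s2) (ha0 : 0 < a0) (ha : forall m, 0 < a m) :
  weakly_submodular (fset_fun t fr s2 a0 a).
Proof.
by apply: weakly_submodular_gain_gt0 => J i iJ; apply: gain_fset_fun_gt0.
Qed.
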